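(* Let $\mathcal{K}$ be a finite simplicial complex with simplices $\sigma_1,\ldots,\sigma_N$, indexed so that $i<j$ whenever $\sigma_i$ is a proper face of $\sigma_j$. Let $B$ be a triangulated surface and let $f:\mathcal{K}\times B\to\mathbb{R}$ be a piecewise-linear fibered filtration function, with induced simplex indexing $\text{idx}_f$. Let $(v,w)$ be a line segment in $B$ (with endpoints $v,w$) that is not on the boundary of $B$, and let $(\sigma_i,\sigma_j)$ be a pair of distinct simplices of $\mathcal{K}$. 1. If $v$ and $w$ are not the two endpoints of an edge of $B$, let $\Delta$ be the unique triangle of $B$ containing $(v,w)$. Then $(\sigma_i,\sigma_j)$ swaps along $(v,w)$ if and only if $(v,w)$ is detected in $\Delta$ for the pair $(\sigma_i,\sigma_j)$. 2. If $v$ and $w$ are the two endpoints of an edge $e$ of $B$, let $\Delta_1,\Delta_2$ be the two triangles of $B$ adjacent to $e$. Then $(\sigma_i,\sigma_j)$ swaps along $(v,w)$ if and only if $(v,w)$ is detected for the pair $(\sigma_i,\sigma_j)$ in exactly one of $\Delta_1,\Delta_2$.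
   Context: A filtration function on a simplicial complex $\mathcal{K}$ is a function $g:\mathcal{K}\to\mathbb{R}$ with $g(\tau)\le g(\sigma)$ whenever $\tau$ is a face of $\sigma$. A piecewise-linear fibered filtration function with base $B$ (a simplicial complex) is a function $f:\mathcal{K}\times B\to\mathbb{R}$ such that $f(\cdot,p)$ is a filtration function for each $p\in B$ and $f(\sigma,\cdot)$ is linear (affine) on each simplex of $B$ for each $\sigma\in\mathcal{K}$. The induced simplex indexing $\text{idx}_f:\mathcal{K}\times B\to\{1,\ldots,N\}$ is the unique function, bijective in the first argument for each $p$, such that $\text{idx}_f(\sigma_a,p)<\text{idx}_f(\sigma_b,p)$ if either $f(\sigma_a,p)<f(\sigma_b,p)$, or $f(\sigma_a,p)=f(\sigma_b,p)$ and $a<b$. Write $I(\sigma,\tau)=\{p\in B: f(\sigma,p)=f(\tau,p)\}$. Two simplices $\sigma,\tau$ have different relative orders at points $p_1,p_2$ if $(\text{idx}_f(\sigma,p_1)-\text{idx}_f(\tau,p_1))(\text{idx}_f(\sigma,p_2)-\text{idx}_f(\tau,p_2))<0$. Swapping: if $I(\sigma_i,\sigma_j)\cap\Delta$ is a line segment $\ell$ cutting a triangle $\Delta$ into two polygons $Q_1,Q_2$, then $(\sigma_i,\sigma_j)$ swaps along $\ell$ if $\sigma_i,\sigma_j$ have different relative orders at every $p_1\in Q_1$, $p_2\in Q_2$. If $e$ is an edge of $B$ with $e\subseteq I(\sigma_i,\sigma_j)$ and adjacent triangles $\Delta_1,\Delta_2$, then $(\sigma_i,\sigma_j)$ swaps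 along $e$ if $\sigma_i,\sigma_j$ have different relative orders at every $p_1\in\Delta_1\setminus e$, $p_2\in\Delta_2\setminus e$. Detection: for an edge $e$ of $B$ with endpoints $a,b$, a point $v\in e$ is detected along $e$ for the pair $(\sigma,\tau)$ if $\sigma,\tau$ have different relative orders at $a$ and $b$ and $v$ is the (unique) point of $e$ at which the relative order of $\sigma$ and $\tau$ changes, i.e. where $f(\sigma,v)=f(\tau,v)$. A line segment $(v,w)$ is detected in a triangle $\Delta$ for the pair $(\sigma,\tau)$ if $v$ is detected along some edge $e_1$ of $\Delta$ for $(\sigma,\tau)$ and $w$ is detected along some edge $e_2$ of $\Delta$ for $(\sigma,\tau)$. *)

From HB Require Import structures.
From mathcomp Require Import all_boot all_order all_algebra.
Set Implicit Arguments. Unset Strict Implicit. Unset Printing Implicit Defensive.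
Import Order.TTheory GRing.Theory Num.Theory.
Local Open Scope ring_scope.

(* Simplices sigma_0, ..., sigma_(N-1) given as nonempty vertex sets;     *)
Definition indexed_complex (U : finType) (N : nat) (sig : 'I_N -> {set U}) :=
  [/\ injective sig,
      (forall i, sig i != set0),
      (forall i (S : {set U}), S != set0 -> S \subset sig i ->
          exists j, sig j = S)
    & (forall i j, sig i \proper sig j -> (i < j)%N)].

(* B is given by its set T of triangles (3-element vertex sets); its     *)
(* simplices are the nonempty subsets of triangles.                      *)
Definition is_vertex (V : finType) (T : {set {set V}}) (x : V) :=
  exists2 D, D \in T & x \in D.

Definition is_edge (V : finType) (T : {set {set V}}) (e : {set V}) :=
  #|e| = 2 /\ exists2 D, D \in T & e \subset D.

Definition link_rel (V : finType) (T : {set {set V}}) (x : V) : rel V :=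
  fun y z => [set x; y; z] \in T.

Definition triangulated_surface (V : finType) (T : {set {set V}}) :=
  [/\ (forall D, D \in T -> #|D| = 3),
      (forall e : {set V}, #|e| = 2 -> (#|[set D in T | e \subset D]| <= 2)%N)
    & (* the link of every vertex is connected (hence a path or a cycle) *)
      (forall x y z, is_vertex T x -> y != x -> z != x ->
          is_edge T [set x; y] -> is_edge T [set x; z] ->
          connect (link_rel T x) y z)].

(* ---------- Points of B in barycentric coordinates ---------- *)
Section Pts.
Variables (R : realFieldType) (V : finType).

Definition in_simplex (S : {set V}) (p : V -> R) :=
  [/\ (forall x, 0 <= p x), \sum_(x : V) p x = 1 & (forall x, p x != 0 -> x \in S)].

Definition in_B (T : {set {set V}}) (p : V -> R) :=
  exists2 D, D \in T & in_simplex D p.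

Definition vpt (a : V) : V -> R := fun x => (x == a)%:R.

Definition on_seg (v w p : V -> R) :=
  exists t : R, [/\ 0 <= t, t <= 1 & forall x, p x = (1 - t) * v x + t * w x].

(* Signed side of p w.r.t. the line through v and w, inside the triangle *)
(* {a,b,c} (determinant of the barycentric coordinate vectors).          *)
Definition side (a b c : V) (v w p : V -> R) : R :=
  p a * (v b * w c - v c * w b) - p b * (v a * w c - v c * w a)
  + p c * (v a * w b - v b * w a).
End Pts.

Section Filt.
Variables (R : realFieldType) (U V : finType) (N : nat) (sig : 'I_N -> {set U}).
Variable (T : {set {set V}}).
Variable f : 'I_N -> (V -> R) -> R.

Definition pl_fibered_filtration :=
  (forall p, in_B T p -> forall i j, sig i \subset sig j -> f i p <= f j p) /\
  (forall i D, D \in T -> forall p q, in_simplex D p -> in_simplex D q ->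
     forall t : R, 0 <= t -> t <= 1 ->
       f i (fun x => (1 - t) * p x + t * q x) = (1 - t) * f i p + t * f i q).

(* induced simplex indexing idx_f (values in 1..N) *)
Definition idx (a : 'I_N) (p : V -> R) : nat :=
  #|[set b : 'I_N | (f b p < f a p) || ((f b p == f a p) && (b < a)%N)]|.+1.

Definition diff_order (i j : 'I_N) (p1 p2 : V -> R) : Prop :=
  (((idx i p1)%:Z - (idx j p1)%:Z) * ((idx i p2)%:Z - (idx j p2)%:Z) < 0)%R.

Definition detected_edge (i j : 'I_N) (a b : V) (v : V -> R) :=
  [/\ diff_order i j (vpt R a) (vpt R b), in_simplex [set a; b] v & f i v = f j v].

Definition detected_tri (i j : 'I_N) (a b c : V) (v w : V -> R) :=
  (detected_edge i j a b v \/ detected_edge i j b c v \/ detected_edge i j a c v) /\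
  (detected_edge i j a b w \/ detected_edge i j b c w \/ detected_edge i j a c w).

(* (sigma_i, sigma_j) swaps along the segment (v,w) cutting the triangle *)
(* Delta = {a,b,c} into two polygons Q1 (side > 0) and Q2 (side < 0).    *)
Definition swaps_tri (i j : 'I_N) (a b c : V) (v w : V -> R) :=
  let D := [set a; b; c] in
  [/\ (forall p, in_simplex D p -> (f i p = f j p <-> on_seg v w p)),
      (exists p, in_simplex D p /\ 0 < side a b c v w p),
      (exists p, in_simplex D p /\ side a b c v w p < 0)
    & (forall p1 p2, in_simplex D p1 -> in_simplex D p2 ->
         0 < side a b c v w p1 -> side a b c v w p2 < 0 -> diff_order i j p1 p2)].

(* (sigma_i, sigma_j) swaps along the edge {a,b}, whose adjacent        *)
(* triangles are {a,b,c1} and {a,b,c2}.                                 *)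
Definition swaps_edge (i j : 'I_N) (a b c1 c2 : V) :=
  (forall p, in_simplex [set a; b] p -> f i p = f j p) /\
  (forall p1 p2, in_simplex [set a; b; c1] p1 -> ~ in_simplex [set a; b] p1 ->
     in_simplex [set a; b; c2] p2 -> ~ in_simplex [set a; b] p2 ->
     diff_order i j p1 p2).
End Filt.

From HB Require Import structures.
From mathcomp Require Import all_boot all_order all_algebra.
From mathcomp Require Import ring lra.
From Stdlib Require Import FunctionalExtensionality.
Set Implicit Arguments. Unset Strict Implicit. Unset Printing Implicit Defensive.
Import Order.TTheory GRing.Theory Num.Theory.
Local Open Scope ring_scope.

(* For i != j the relative order of sigma_i and sigma_j at p is given by the
   sign of G := f_i - f_j, a zero being resolved by the index order ([below]).
   On a triangle G is affine, hence determined by its values at the vertices.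

   Along an edge ab, swapping means that G vanishes on ab while the opposite
   vertices c1 and c2 lie on different sides; detection in the triangle abc
   means that G vanishes at a and b while c is not on the side of the tie, so
   detection in exactly one triangle is the same condition.

   Inside a triangle, swapping along (v,w) and detecting (v,w) both amount to:
   G vanishes, without vanishing identically, at two boundary points v and w
   that are not on a common edge.  Then G takes both signs at the vertices,
   which puts each of v and w on an edge whose endpoints are ordered
   differently; and G is a nonzero multiple of the determinant [side v w],
   whose zero set in the triangle is the segment [v,w].  Conversely a swap
   forces v and w onto the boundary, for otherwise the zero line of G would
   extend beyond the segment inside the triangle. *)

Section Simplices.
Variables (R : realFieldType) (V : finType).
Implicit Types (a b c x y : V) (p q v w : V -> R) (S D : {set V}).

Lemma card_set3_neq a b c : #|[set a; b; c]| = 3%N -> [/\ a != b, b != c & a != c].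
Proof.
rewrite -setUA cardsU1 cards2 !inE.
by case: (a == b); case: (b == c); case: (a == c).
Qed.

Lemma set3P a b c x : reflect [\/ x = a, x = b | x = c] (x \in [set a; b; c]).
Proof.
apply: (iffP idP) => [|[]->]; rewrite !inE ?eqxx ?orbT //.
by case/orP=> [/orP[]|] /eqP->; [constructor 1 | constructor 2 | constructor 3].
Qed.

Lemma set3_rot a b c : [set b; c; a] = [set a; b; c].
Proof. by apply/setP => x; rewrite !inE orbC orbA. Qed.

Lemma in_simplex_shrink S D p :
  in_simplex S p -> (forall x, p x != 0 -> x \in D) -> in_simplex D p.
Proof. by case. Qed.

Lemma vpt_id a : vpt R a a = 1.
Proof. by rewrite /vpt eqxx. Qed.

Lemma vpt_neq a x : x != a -> vpt R a x = 0.
Proof. by rewrite /vpt => /negbTE->. Qed.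

Lemma in_simplex_vpt S a : in_simplex S (vpt R a) <-> a \in S.
Proof.
have sum1 : \sum_x vpt R a x = 1.
  by rewrite (bigD1 a) //= /vpt eqxx big1 ?addr0 // => x /negbTE ->.
split=> [[_ _ /(_ a)]|aS]; first by rewrite /vpt eqxx oner_eq0; apply.
by split=> // x; rewrite /vpt ?ler0n // pnatr_eq0 eqb0 negbK => /eqP->.
Qed.

Lemma funext3 a b c p q :
  (forall x, x != a -> x != b -> x != c -> p x = q x) ->
  p a = q a -> p b = q b -> p c = q c -> p = q.
Proof.
move=> off ea eb ec; apply: functional_extensionality => x.
have [->|xa] := eqVneq x a; first by [].
have [->|xb] := eqVneq x b; first by [].
by have [->|xc] := eqVneq x c; last exact: off.
Qed.

Definition no_common_edge a b c v w :=
  forall x, x \in [set a; b; c] -> v x = 0 -> w x != 0.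

Lemma no_common_edge_rot a b c v w :
  no_common_edge b c a v w = no_common_edge a b c v w.
Proof. by rewrite /no_common_edge set3_rot. Qed.

Definition bary3 a b c p :=
  [/\ 0 <= p a, 0 <= p b, 0 <= p c, p a + p b + p c = 1
    & forall x, x != a -> x != b -> x != c -> p x = 0].

Lemma in_simplex3P a b c : a != b -> b != c -> a != c ->
  forall p, in_simplex [set a; b; c] p <-> bary3 a b c p.
Proof.
move=> ab bc ac p.
have sum3 q : (forall x, x != a -> x != b -> x != c -> q x = 0) ->
    \sum_x q x = q a + q b + q c.
  move=> q0; rewrite (bigD1 a) // (bigD1 b) 1?eq_sym // (bigD1 c) /=; last first.
    by rewrite eq_sym ac eq_sym bc.
  by rewrite big1 ?addr0 ?addrA // => x /andP[/andP[xa xb] xc]; exact: q0.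
split=> [[p_ge0 p_sum p_supp]|[pa pb pc p_sum p0]].
  have p0 x : x != a -> x != b -> x != c -> p x = 0.
    move=> xa xb xc; apply/eqP/negPn/negP => /p_supp.
    by rewrite !inE (negbTE xa) (negbTE xb) (negbTE xc).
  by split; rewrite -?sum3.
split; last 1 first.
- move=> x; apply: contraR; rewrite !inE => /norP[/norP[xa xb] xc].
  by rewrite p0.
- move=> x; have [->|xa] := eqVneq x a; first by [].
  have [->|xb] := eqVneq x b; first by [].
  by have [->|xc] := eqVneq x c; last rewrite p0.
- by rewrite sum3.
Qed.

Lemma on_seg_left v w : on_seg v w v.
Proof. by exists 0; split=> // x; rewrite subr0 mul1r mul0r addr0. Qed.

Lemma on_seg_right v w : on_seg v w w.
Proof. by exists 1; split=> // x; rewrite subrr mul0r mul1r add0r. Qed.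

Lemma on_segC v w p : on_seg v w p -> on_seg w v p.
Proof.
by case=> t [t0 t1 pE]; exists (1 - t); split=> [||x]; rewrite ?pE; [lra | lra | ring].
Qed.

Lemma in_simplex_edge a b c p : in_simplex [set a; b; c] p -> p c = 0 ->
  in_simplex [set a; b] p.
Proof.
move=> pD pc; apply: (in_simplex_shrink pD) => x px0.
have [xc|/negbTE xc] := eqVneq x c; first by rewrite xc pc eqxx in px0.
by case: pD => _ _ /(_ x px0); rewrite !inE xc orbF.
Qed.

End Simplices.

Section Affine.
Variables (R : realFieldType) (V : finType).

Definition affine_on (D : {set V}) (h : (V -> R) -> R) :=
  forall p q, in_simplex D p -> in_simplex D q -> forall t, 0 <= t -> t <= 1 ->
    h (fun x => (1 - t) * p x + t * q x) = (1 - t) * h p + t * h q.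

Lemma affine_onB D h1 h2 :
  affine_on D h1 -> affine_on D h2 -> affine_on D (fun p => h1 p - h2 p).
Proof. by move=> h1A h2A p q pD qD t t0 t1; rewrite h1A // h2A //; ring. Qed.

Variables (a b c : V) (h : (V -> R) -> R).
Hypotheses (ab : a != b) (bc : b != c) (ac : a != c).
Hypothesis h_affine : affine_on [set a; b; c] h.

Let vpt3 : [/\ in_simplex [set a; b; c] (vpt R a),
  in_simplex [set a; b; c] (vpt R b) & in_simplex [set a; b; c] (vpt R c)].
Proof. by split; apply/in_simplex_vpt; rewrite !inE eqxx ?orbT. Qed.

Lemma affine_on_edge p : in_simplex [set a; b; c] p -> p a = 0 ->
  h p = p b * h (vpt R b) + p c * h (vpt R c).
Proof.
move=> pD pa; have [_ pb pc psum p0] := (in_simplex3P ab bc ac _).1 pD.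
have cb : c != b by rewrite eq_sym.
have pE : p = (fun x => (1 - p c) * vpt R b x + p c * vpt R c x).
  apply: (funext3 (a := a) (b := b) (c := c)) => [x xa xb xc|||].
  - by rewrite !vpt_neq // p0 //; ring.
  - by rewrite !vpt_neq // pa; ring.
  - by rewrite vpt_id vpt_neq //; lra.
  - by rewrite vpt_id vpt_neq //; ring.
have [_ vb vc] := vpt3.
rewrite {1}pE h_affine //; last lra.
by have -> : 1 - p c = p b by lra.
Qed.

Lemma affine_on_bary3 p : in_simplex [set a; b; c] p ->
  h p = p a * h (vpt R a) + p b * h (vpt R b) + p c * h (vpt R c).
Proof.
move=> pD; have [pa pb pc psum p0] := (in_simplex3P ab bc ac _).1 pD.
have [ba ca] : b != a /\ c != a by rewrite !(eq_sym _ a).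
have [va _ _] := vpt3.
have [pa1|pa1] := eqVneq (p a) 1.
  have -> : p = vpt R a.
    apply: (funext3 (a := a) (b := b) (c := c)) => [x xa xb xc|||];
      rewrite ?vpt_id ?vpt_neq //; [exact: p0 | lra..].
  by rewrite vpt_id !vpt_neq //; ring.
have pa1' : 1 - p a != 0 by rewrite subr_eq0 eq_sym.
pose q x := if x == a then 0 else p x / (1 - p a).
have qD : in_simplex [set a; b; c] q.
  apply/(in_simplex3P ab bc ac); rewrite /bary3 /q eqxx (negbTE ba) (negbTE ca).
  split=> [||||x /[dup] xa /negbTE-> xb xc]; rewrite ?lexx ?divr_ge0 //; try lra.
  - by rewrite add0r -mulrDl (_ : p b + p c = 1 - p a) ?divff //; lra.
  - by rewrite p0 ?mul0r.
have pE : p = (fun x => (1 - p a) * q x + p a * vpt R a x).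
  apply: (funext3 (a := a) (b := b) (c := c)) => [x xa xb xc|||];
    rewrite /q ?eqxx ?vpt_id ?vpt_neq ?(negbTE ba) ?(negbTE ca) ?(negbTE xa) //;
    [field | ring | field..] => //.
rewrite {1}pE h_affine //; last lra.
rewrite (affine_on_edge qD) /q ?eqxx // (negbTE ba) (negbTE ca).
by field.
Qed.

End Affine.

Lemma card_preds_ltE (T : finType) (r : rel T) x y :
  transitive r -> irreflexive r -> r x y || r y x ->
  (#|[set z | r z x]| < #|[set z | r z y]|)%N = r x y.
Proof.
move=> r_trans r_irr xy_total.
have mono u v : r u v -> (#|[set z | r z u]| < #|[set z | r z v]|)%N.
  move=> ruv; apply/proper_card/properP; split.
    by apply/subsetP => z; rewrite !inE => /r_trans; apply.
  by exists u; rewrite !inE ?r_irr.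
case rxy: (r x y); first exact: mono.
by rewrite rxy /= in xy_total; rewrite ltnNge ltnW ?mono.
Qed.

Section Below.
Variable R : realFieldType.
Implicit Types (t : bool) (x y : R).

Definition below t x := (x < 0) || ((x == 0) && t).

Lemma below0 t : below t 0 = t.
Proof. by rewrite /below ltxx eqxx. Qed.

Lemma belowZ t k x : 0 < k -> below t (k * x) = below t x.
Proof. by move=> k_gt0; rewrite /below pmulr_rlt0 // mulf_eq0 gt_eqF. Qed.

Lemma below_mul_lt0 t x y : x * y < 0 -> below t x != below t y.
Proof.
rewrite mulr_lt0 => /and3P[x0 y0]; rewrite /below (negbTE x0) (negbTE y0) !andFb !orbF.
by rewrite negb_eqb.
Qed.

Lemma below_pick t (ua ub ga gb gc : R) :
  0 <= ua -> 0 <= ub -> ua + ub = 1 -> ua * ga + ub * gb = 0 ->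
  [|| 0 < ga, 0 < gb | 0 < gc] -> [|| ga < 0, gb < 0 | gc < 0] ->
  [\/ below t ga != below t gb, ub = 0 /\ below t ga != below t gc
     | ua = 0 /\ below t gb != below t gc].
Proof.
move=> ua_ge0 ub_ge0 u_sum u_zero pos neg.
have neq_split x y z : below t x != below t z ->
    below t x != below t y \/ below t y != below t z.
  by case: (below t x) (below t y) (below t z) => [] [] []; auto.
have [ua0|ua_neq0] := eqVneq ua 0.
  have gb0 : gb = 0 by move: u_zero; rewrite ua0 (_ : ub = 1) ?mul0r ?add0r ?mul1r //; lra.
  rewrite gb0 ltxx /= in pos neg.
  have gac : below t ga != below t gc.
    by apply: below_mul_lt0; case/orP: pos => ?; case/orP: neg => ?; nra.
  by case: (neq_split _ gb _ gac) => h; [apply: Or31 | apply: Or33].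
have [ub0|ub_neq0] := eqVneq ub 0.
  have ga0 : ga = 0 by move: u_zero; rewrite ub0 (_ : ua = 1) ?mul0r ?addr0 ?mul1r //; lra.
  rewrite ga0 ltxx /= in pos neg.
  have gbc : below t gb != below t gc.
    by apply: below_mul_lt0; case/orP: pos => ?; case/orP: neg => ?; nra.
  by case: (neq_split _ ga _ gbc) => h; [apply: Or31; rewrite eq_sym | apply: Or32].
constructor 1; apply: below_mul_lt0.
have ua_gt0 : 0 < ua by rewrite lt_def ua_neq0.
have ub_gt0 : 0 < ub by rewrite lt_def ub_neq0.
case: (ltgtP ga 0) => ga0.
- by rewrite nmulr_rlt0 //; nra.
- by rewrite pmulr_rlt0 //; nra.
have gb0 : gb = 0.
  by move/eqP: u_zero; rewrite ga0 mulr0 add0r mulf_eq0 (negbTE ub_neq0) => /eqP.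
by move: pos neg; rewrite ga0 gb0 ltxx /= => pos neg; lra.
Qed.

End Below.

Section Order.
Variables (R : realFieldType) (V : finType) (N : nat) (f : 'I_N -> (V -> R) -> R).
Implicit Types (i j : 'I_N) (p q : V -> R).

Let idx_rel p : rel 'I_N :=
  fun k l => (f k p < f l p) || ((f k p == f l p) && (k < l)%N).

Let idx_rel_trans p : transitive (idx_rel p).
Proof.
move=> k l m /orP[lk|/andP[/eqP lk lk']] /orP[km|/andP[/eqP km km']].
- by rewrite /idx_rel (lt_trans lk km).
- by rewrite /idx_rel -km lk.
- by rewrite /idx_rel lk km.
- by rewrite /idx_rel lk km eqxx (ltn_trans lk' km') orbT.
Qed.

Let idx_rel_irr p : irreflexive (idx_rel p).
Proof. by move=> k; rewrite /idx_rel ltxx eqxx ltnn. Qed.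

Let idx_rel_total p i j : i != j -> idx_rel p i j || idx_rel p j i.
Proof.
rewrite /idx_rel => ij; case: (ltgtP (f i p) (f j p)) => //= _.
by rewrite ?eqxx /=; case: (ltngtP i j) ij => // /val_inj->; rewrite eqxx.
Qed.

Let idx_lt_rel i j p : i != j -> (idx f i p < idx f j p)%N = idx_rel p i j.
Proof.
move=> ij.
by rewrite ltnS (card_preds_ltE (@idx_rel_trans p) (@idx_rel_irr p) (@idx_rel_total p _ _ ij)).
Qed.

Lemma idx_ltE i j p : i != j ->
  (idx f i p < idx f j p)%N = below (i < j)%N (f i p - f j p).
Proof. by move=> ij; rewrite idx_lt_rel // /below subr_lt0 subr_eq0. Qed.

Lemma diff_orderE i j p q : i != j ->
  diff_order f i j p q <->
  below (i < j)%N (f i p - f j p) != below (i < j)%N (f i q - f j q).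
Proof.
move=> ij; rewrite /diff_order -!idx_ltE //.
have idx_neq r : (idx f i r)%:Z - (idx f j r)%:Z != 0.
  rewrite subr_eq0 eqz_nat neq_ltn idx_lt_rel // idx_lt_rel 1?eq_sym //.
  exact: idx_rel_total.
by rewrite mulr_lt0 !idx_neq /= !subr_lt0 !ltz_nat negb_eqb; split=> /idP.
Qed.

End Order.

Section Side.
Variables (R : realFieldType) (V : finType).
Implicit Types (a b c : V) (p q v w h : V -> R).

Lemma side_rot a b c v w p : side a b c v w p = side b c a v w p.
Proof. by rewrite /side; ring. Qed.

Lemma side_on_seg a b c v w p : on_seg v w p -> side a b c v w p = 0.
Proof. by case=> t [_ _ pE]; rewrite /side !pE; ring. Qed.

Lemma side_vpt a b c v w : a != b -> b != c -> a != c ->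
  [/\ side a b c v w (vpt R a) = v b * w c - v c * w b,
      side a b c v w (vpt R b) = v c * w a - v a * w c
    & side a b c v w (vpt R c) = v a * w b - v b * w a].
Proof.
move=> ab bc ac; have ba : b != a by rewrite eq_sym.
have cb : c != b by rewrite eq_sym.
have ca : c != a by rewrite eq_sym.
by split; rewrite /side ?vpt_id ?vpt_neq //; ring.
Qed.

(* Two linear forms vanishing at v and w are proportional. *)
Lemma side_exchange a b c v w p q h :
  v a * h a + v b * h b + v c * h c = 0 -> w a * h a + w b * h b + w c * h c = 0 ->
  (p a * h a + p b * h b + p c * h c) * side a b c v w q =
  (q a * h a + q b * h b + q c * h c) * side a b c v w p.
Proof.
move=> vh wh; apply/eqP; rewrite -subr_eq0; apply/eqP.
transitivity ((w a * h a + w b * h b + w c * h c) * side a b c p q v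
              - (v a * h a + v b * h b + v c * h c) * side a b c p q w).
  by rewrite /side; ring.
by rewrite vh wh; ring.
Qed.

Lemma side_eq0_coords a b c v w p :
  p a + p b + p c = 1 -> v a + v b + v c = 1 -> w a + w b + w c = 1 -> v a = 0 ->
  side a b c v w p = 0 ->
  p b * w a = (w a - p a) * v b + p a * w b /\ p c * w a = (w a - p a) * v c + p a * w c.
Proof.
move=> ps vs ws va0; rewrite /side va0.
have [-> -> ->] : [/\ p c = 1 - p a - p b, v c = 1 - v b & w c = 1 - w a - w b].
  by split; lra.
move=> s0; split; apply/eqP; rewrite -subr_eq0.
  by rewrite -[X in _ == X]s0; apply/eqP; ring.
by rewrite -oppr_eq0 -[X in _ == X]s0; apply/eqP; ring.
Qed.

Lemma side_vpt_eq0 a b c v w : a != b -> b != c -> a != c ->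
  in_simplex [set a; b; c] v -> in_simplex [set a; b; c] w ->
  side a b c v w (vpt R a) = 0 -> side a b c v w (vpt R b) = 0 ->
  side a b c v w (vpt R c) = 0 -> v = w.
Proof.
move=> ab bc ac vD wD; have [-> -> ->] := side_vpt v w ab bc ac => za zb zc.
have [_ _ _ vs v0] := (in_simplex3P ab bc ac v).1 vD.
have [_ _ _ ws w0] := (in_simplex3P ab bc ac w).1 wD.
have ea : v a - w a = (v a * w b - v b * w a) - (v c * w a - v a * w c)
    - v a * (w a + w b + w c - 1) + w a * (v a + v b + v c - 1) by ring.
have eb : v b - w b = (v b * w c - v c * w b) - (v a * w b - v b * w a)
    - v b * (w a + w b + w c - 1) + w b * (v a + v b + v c - 1) by ring.
rewrite za zb zc vs ws in ea eb.
apply: (funext3 (a := a) (b := b) (c := c)) => [x xa xb xc|||]; try lra.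
by rewrite v0 ?w0.
Qed.

Lemma side_eq0_on_seg_va0 a b c v w p : a != b -> b != c -> a != c ->
  in_simplex [set a; b; c] v -> in_simplex [set a; b; c] w ->
  in_simplex [set a; b; c] p -> no_common_edge a b c v w -> v a = 0 ->
  (exists2 x, x \in [set a; b; c] & w x = 0) ->
  side a b c v w p = 0 -> on_seg v w p.
Proof.
move=> ab bc ac vD wD pD apart va0 wB s0.
have [v_a v_b v_c vs v0] := (in_simplex3P ab bc ac v).1 vD.
have [w_a w_b w_c ws w0] := (in_simplex3P ab bc ac w).1 wD.
have [p_a p_b p_c ps p0] := (in_simplex3P ab bc ac p).1 pD.
have v_pos x : x \in [set a; b; c] -> w x = 0 -> 0 < v x.
  move=> xD wx0; have [v_ge0 _ _] := vD; rewrite lt_def v_ge0 andbT.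
  by apply/eqP => /(apart x xD); rewrite wx0 eqxx.
have wa0 : w a != 0 by apply: apart; rewrite ?inE ?eqxx.
have [pb_id pc_id] := side_eq0_coords ps vs ws va0 s0.
pose t := p a / w a.
have seg_b : p b = (1 - t) * v b + t * w b.
  by apply: (mulIf wa0); rewrite pb_id /t; field.
have seg_c : p c = (1 - t) * v c + t * w c.
  by apply: (mulIf wa0); rewrite pc_id /t; field.
exists t; split=> [||x].
- by rewrite divr_ge0 // ltW // lt_def wa0.
- case: wB => x /set3P[]-> wx0; first by rewrite wx0 eqxx in wa0.
  + have := v_pos b; rewrite !inE eqxx orbT => /(_ isT wx0).
    by rewrite seg_b wx0 in p_b; nra.
  + have := v_pos c; rewrite !inE eqxx orbT => /(_ isT wx0).
    by rewrite seg_c wx0 in p_c; nra.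
- have [->|xa] := eqVneq x a; first by rewrite va0 /t divfK //; ring.
  have [->|xb] := eqVneq x b; first exact: seg_b.
  have [->|xc] := eqVneq x c; first exact: seg_c.
  by rewrite p0 ?v0 ?w0 //; ring.
Qed.

Lemma side_eq0_on_seg a b c v w p : a != b -> b != c -> a != c ->
  in_simplex [set a; b; c] v -> in_simplex [set a; b; c] w ->
  in_simplex [set a; b; c] p -> no_common_edge a b c v w ->
  (exists2 x, x \in [set a; b; c] & v x = 0) ->
  (exists2 x, x \in [set a; b; c] & w x = 0) ->
  side a b c v w p = 0 -> on_seg v w p.
Proof.
move=> ab bc ac vD wD pD apart [x /set3P[]-> vx0] wB s0.
- exact: (side_eq0_on_seg_va0 ab bc ac).
- rewrite -(set3_rot a b c) in vD wD pD wB; rewrite -no_common_edge_rot in apart.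
  apply: (side_eq0_on_seg_va0 bc _ _ vD wD pD apart vx0 wB); rewrite 1?eq_sym //.
  by rewrite -side_rot.
- rewrite -(set3_rot a b c) -(set3_rot b c a) in vD wD pD wB.
  rewrite -no_common_edge_rot -(no_common_edge_rot b c a) in apart.
  apply: (side_eq0_on_seg_va0 _ ab _ vD wD pD apart vx0 wB); rewrite 1?eq_sym //.
  by rewrite -(side_rot b c a) -side_rot.
Qed.

End Side.

Section Swaps.
Variables (R : realFieldType) (V : finType) (N : nat) (T : {set {set V}}).
Variable f : 'I_N -> (V -> R) -> R.
Hypothesis T_card : forall D, D \in T -> #|D| = 3%N.
Hypothesis f_affine : forall k D, D \in T -> affine_on D (f k).
Variables i j : 'I_N.
Hypothesis neq_ij : i != j.

Local Notation G p := (f i p - f j p).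
Local Notation g x := (G (vpt R x)).
Local Notation B x := (below (i < j)%N x).
Implicit Types (a b c x y z : V) (p q u v w : V -> R).

Lemma triangle_neq a b c : [set a; b; c] \in T -> [/\ a != b, b != c & a != c].
Proof. by move/T_card/card_set3_neq. Qed.

Lemma G_bary3 a b c p : [set a; b; c] \in T -> in_simplex [set a; b; c] p ->
  G p = p a * g a + p b * g b + p c * g c.
Proof.
move=> abcT; have [ab bc ac] := triangle_neq abcT.
have GA : affine_on [set a; b; c] (fun p => G p) by apply: affine_onB; apply: f_affine.
exact: (affine_on_bary3 ab bc ac GA).
Qed.

Lemma eq_fG p : f i p = f j p <-> G p = 0.
Proof. by split=> [->|/eqP]; [rewrite subrr | rewrite subr_eq0 => /eqP]. Qed.

Lemma diff_order_below p q : diff_order f i j p q <-> B (G p) != B (G q).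
Proof. exact: diff_orderE. Qed.

Lemma detected_edge_vpt x y z : detected_edge f i j x y (vpt R z) <->
  [/\ B (g x) != B (g y), z \in [set x; y] & g z = 0].
Proof.
split=> [[/diff_order_below d /in_simplex_vpt zS /eq_fG e]|[d zS e]] //.
by split; [exact/diff_order_below | exact/in_simplex_vpt | exact/eq_fG].
Qed.

Lemma detected_tri_vertices a b c : [set a; b; c] \in T ->
  detected_tri f i j a b c (vpt R a) (vpt R b) <->
  [/\ g a = 0, g b = 0 & B (g c) != (i < j)%N].
Proof.
move=> abcT; have [ab bc ac] := triangle_neq abcT.
rewrite /detected_tri !detected_edge_vpt !inE !eqxx /= (negbTE ab) (negbTE ac).
rewrite [b == a]eq_sym (negbTE ab) (negbTE bc).
split=> [[va vb]|[ga gb gc]].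
  have ga : g a = 0 by case: va => [[]|[[]|[]]].
  have gb : g b = 0 by case: vb => [[]|[[]|[]]].
  rewrite ga gb below0 in va *; split=> //.
  by case: va => [[]|[[]|[]]]; rewrite ?eqxx // eq_sym.
by split; [right; right | right; left]; split; rewrite ?ga ?gb ?below0 // eq_sym.
Qed.

Lemma swaps_edgeE a b c1 c2 : [set a; b; c1] \in T -> [set a; b; c2] \in T ->
  swaps_edge f i j a b c1 c2 <-> [/\ g a = 0, g b = 0 & B (g c1) != B (g c2)].
Proof.
move=> abc1T abc2T; have [ab bc1 ac1] := triangle_neq abc1T.
have [_ bc2 ac2] := triangle_neq abc2T.
have c_off_edge c : b != c -> a != c -> c \notin [set a; b].
  by move=> bc ac; rewrite !inE negb_or ![c == _]eq_sym ac bc.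
have vpt_off_edge c : b != c -> a != c -> ~ in_simplex [set a; b] (vpt R c).
  by move=> bc ac /in_simplex_vpt; apply/negP/c_off_edge.
have sign_off_edge c : [set a; b; c] \in T -> g a = 0 -> g b = 0 ->
    forall p, in_simplex [set a; b; c] p -> ~ in_simplex [set a; b] p ->
    B (G p) = B (g c).
  move=> abcT ga gb p pD p_off; rewrite (G_bary3 abcT pD) ga gb !mulr0 !add0r.
  have [/(_ c) pc_ge0 _ _] := pD; apply: belowZ; rewrite lt_def pc_ge0 andbT.
  by apply: contra_notN p_off => /eqP; apply: in_simplex_edge.
have vD c x : x \in [set a; b; c] -> in_simplex [set a; b; c] (vpt R x).
  by move/in_simplex_vpt.
split=> [[edge0 cross]|[ga gb gc]].
  have ga : g a = 0 by apply/eq_fG/edge0/in_simplex_vpt; rewrite !inE eqxx.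
  have gb : g b = 0 by apply/eq_fG/edge0/in_simplex_vpt; rewrite !inE eqxx orbT.
  split=> //; apply/diff_order_below/cross;
    by [apply: vD; rewrite !inE eqxx orbT | exact: vpt_off_edge].
split=> [p pE|p1 p2 p1D p1E p2D p2E].
  have [_ _ p_supp] := pE.
  have pc1 : p c1 = 0 by apply/eqP; apply: contraNT (c_off_edge _ bc1 ac1); apply: p_supp.
  have pD : in_simplex [set a; b; c1] p.
    by apply: (in_simplex_shrink pE) => x /(p_supp x); rewrite !inE => ->.
  by apply/eq_fG; rewrite (G_bary3 abc1T pD) ga gb pc1; ring.
apply/diff_order_below.
by rewrite (sign_off_edge _ abc1T ga gb _ p1D p1E) (sign_off_edge _ abc2T ga gb _ p2D p2E).
Qed.

Lemma swaps_edge_iff_detected_once a b c1 c2 :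
  [set a; b; c1] \in T -> [set a; b; c2] \in T ->
  (swaps_edge f i j a b c1 c2 <->
     (detected_tri f i j a b c1 (vpt R a) (vpt R b) /\
        ~ detected_tri f i j a b c2 (vpt R a) (vpt R b)) \/
     (~ detected_tri f i j a b c1 (vpt R a) (vpt R b) /\
        detected_tri f i j a b c2 (vpt R a) (vpt R b))).
Proof.
move=> abc1T abc2T; rewrite swaps_edgeE //.
have [D1 D2] := (detected_tri_vertices abc1T, detected_tri_vertices abc2T).
have tie_of c : [set a; b; c] \in T -> g a = 0 -> g b = 0 ->
    ~ detected_tri f i j a b c (vpt R a) (vpt R b) -> B (g c) = (i < j)%N.
  move=> abcT ga gb nD; apply/eqP/negPn/negP => Bc.
  by apply/nD/(detected_tri_vertices abcT).
split=> [[ga gb B12]|[[/D1[ga gb B1] nD2]|[nD1 /D2[ga gb B2]]]].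
- have [B1|B1] := eqVneq (B (g c1)) (i < j)%N.
    right; split=> [/D1[_ _]|]; first by rewrite B1 eqxx.
    by apply/D2; split=> //; move: B12; rewrite B1 eq_sym.
  left; split; first by apply/D1; split.
  case/D2=> _ _.
  by move: B12 B1; case: (B (g c1)); case: (B (g c2)); case: (i < j)%N.
- by rewrite (tie_of c2 abc2T).
- by rewrite (tie_of c1 abc1T) // eq_sym.
Qed.

Definition detected_at a b c u :=
  detected_edge f i j a b u \/ detected_edge f i j b c u \/ detected_edge f i j a c u.

Definition boundary_zero a b c u :=
  G u = 0 /\ exists2 x, x \in [set a; b; c] & u x = 0.

Lemma detected_edgeC x y u : detected_edge f i j x y u -> detected_edge f i j y x u.
Proof.
case=> /diff_order_below d uS e; split=> //; last by rewrite setUC.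
by apply/diff_order_below; rewrite eq_sym.
Qed.

Lemma detected_at_rot a b c u : detected_at b c a u -> detected_at a b c u.
Proof.
case=> [bc|[/detected_edgeC ac|/detected_edgeC ab]]; last by left.
  by right; left.
by right; right.
Qed.

Lemma detected_at_boundary_zero a b c u : [set a; b; c] \in T ->
  detected_at a b c u ->
  boundary_zero a b c u /\ exists2 x, x \in [set a; b; c] & g x != 0.
Proof.
move=> abcT; have [ab bc ac] := triangle_neq abcT.
have of_edge x y z : x \in [set a; b; c] -> y \in [set a; b; c] ->
    z \in [set a; b; c] -> z \notin [set x; y] -> detected_edge f i j x y u ->
    boundary_zero a b c u /\ exists2 x, x \in [set a; b; c] & g x != 0.
  move=> xD yD zD zxy [/diff_order_below d [_ _ u_supp] /eq_fG Gu].
  split; first by split=> //; exists z => //; apply/eqP; apply: contraNT zxy; apply: u_supp.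
  have [gx0|gx] := eqVneq (g x) 0; last by exists x.
  by exists y => //; apply: contraNneq d => gy0; rewrite gx0 gy0.
have [aD bD cD] : [/\ a \in [set a; b; c], b \in [set a; b; c] & c \in [set a; b; c]].
  by split; rewrite !inE eqxx ?orbT.
case=> [|[|]]; [apply: (of_edge a b c) | apply: (of_edge b c a) | apply: (of_edge a c b)];
  by rewrite // !inE negb_or ?(eq_sym c) ?(eq_sym b a) ?ab ?bc ?ac.
Qed.

Lemma boundary_zero_detected a b c u : [set a; b; c] \in T ->
  in_simplex [set a; b; c] u ->
  (exists2 x, x \in [set a; b; c] & 0 < g x) ->
  (exists2 x, x \in [set a; b; c] & g x < 0) ->
  boundary_zero a b c u -> detected_at a b c u.
Proof.
move=> abcT uD pos neg [Gu [x xD ux0]].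
wlog xc : a b c abcT uD pos neg xD / x = c.
  move=> base; case/set3P: (xD) => xE.
  - by apply/detected_at_rot/(base b c a); rewrite ?(set3_rot a b c).
  - apply/detected_at_rot/detected_at_rot/(base c a b) => //;
      by rewrite ?(set3_rot b c a) ?(set3_rot a b c).
  - exact: (base a b c).
move: ux0; rewrite {x xD}xc => uc0.
have [ab bc ac] := triangle_neq abcT.
have [u_a u_b _ u_sum _] := (in_simplex3P ab bc ac u).1 uD.
have [_ _ u_supp] := uD.
have Gu_ab : u a * g a + u b * g b = 0.
  by rewrite -Gu (G_bary3 abcT uD) uc0 mul0r addr0.
have pos3 : [|| 0 < g a, 0 < g b | 0 < g c].
  by case: pos => x /set3P[]-> ->; rewrite ?orbT.
have neg3 : [|| g a < 0, g b < 0 | g c < 0].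
  by case: neg => x /set3P[]-> ->; rewrite ?orbT.
have u_ab : u a + u b = 1 by lra.
case: (below_pick (i < j)%N u_a u_b u_ab Gu_ab pos3 neg3) => [d|[ub0 d]|[ua0 d]].
- by left; split; [exact/diff_order_below | exact: in_simplex_edge uD uc0 | exact/eq_fG].
- right; right; split; [exact/diff_order_below | | exact/eq_fG].
  apply: (in_simplex_shrink uD) => y uy; have yD := u_supp y uy; case/set3P: yD uy => -> uy;
    rewrite !inE ?eqxx ?orbT //; by rewrite ub0 eqxx in uy.
- right; left; split; [exact/diff_order_below | | exact/eq_fG].
  apply: (in_simplex_shrink uD) => y uy; have yD := u_supp y uy; case/set3P: yD uy => -> uy;
    rewrite !inE ?eqxx ?orbT //; by rewrite ua0 eqxx in uy.
Qed.

Lemma zeros_two_signed a b c v w : [set a; b; c] \in T ->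
  in_simplex [set a; b; c] v -> in_simplex [set a; b; c] w ->
  no_common_edge a b c v w ->
  G v = 0 -> G w = 0 -> (exists2 x, x \in [set a; b; c] & g x != 0) ->
  (exists2 x, x \in [set a; b; c] & 0 < g x) /\
  (exists2 x, x \in [set a; b; c] & g x < 0).
Proof.
move=> abcT vD wD apart Gv Gw [x0 x0D gx0]; have [ab bc ac] := triangle_neq abcT.
(* Were s * G nonnegative at the vertices, G v = G w = 0 would make v and w
   vanish wherever G does not. *)
have one_signed s : s != 0 -> ~ (forall x, x \in [set a; b; c] -> 0 <= s * g x).
  move=> s0 sg_ge0.
  have [ga gb gc] : [/\ 0 <= s * g a, 0 <= s * g b & 0 <= s * g c].
    by split; apply: sg_ge0; rewrite !inE eqxx ?orbT.
  have zero_at u : in_simplex [set a; b; c] u -> G u = 0 -> u x0 = 0.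
    move=> uD Gu; have [u_a u_b u_c _ _] := (in_simplex3P ab bc ac u).1 uD.
    have := congr1 ( *%R s) Gu; rewrite (G_bary3 abcT uD) mulr0 => sGu.
    have [ta tb tc] : [/\ u a * (s * g a) = 0, u b * (s * g b) = 0 & u c * (s * g c) = 0].
      have := mulr_ge0 u_a ga; have := mulr_ge0 u_b gb; have := mulr_ge0 u_c gc.
      by split; nra.
    have sgx0 : s * g x0 != 0 by rewrite mulf_neq0.
    apply/eqP; case/set3P: (x0D) sgx0 => -> /negbTE sgx0;
      [move/eqP: ta | move/eqP: tb | move/eqP: tc]; by rewrite mulf_eq0 sgx0 orbF.
  by move: (apart x0 x0D (zero_at v vD Gv)); rewrite zero_at ?eqxx.
split.
- have [/exists_inP //|/exists_inPn g_le0] := boolP [exists x in [set a; b; c], 0 < g x].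
  case: (one_signed (-1)); first by rewrite oppr_eq0 oner_eq0.
  by move=> x /g_le0; rewrite -leNgt mulN1r oppr_ge0.
- have [/exists_inP //|/exists_inPn g_ge0] := boolP [exists x in [set a; b; c], g x < 0].
  case: (one_signed 1); first exact: oner_neq0.
  by move=> x /g_ge0; rewrite -leNgt mul1r.
Qed.

Lemma G_prop_side a b c v w : [set a; b; c] \in T ->
  in_simplex [set a; b; c] v -> in_simplex [set a; b; c] w -> v <> w ->
  G v = 0 -> G w = 0 -> (exists2 x, x \in [set a; b; c] & g x != 0) ->
  exists2 k, k != 0 &
    forall p, in_simplex [set a; b; c] p -> G p = k * side a b c v w p.
Proof.
move=> abcT vD wD vw Gv Gw [x xD gx]; have [ab bc ac] := triangle_neq abcT.
have exch p q : in_simplex [set a; b; c] p -> in_simplex [set a; b; c] q ->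
    G p * side a b c v w q = G q * side a b c v w p.
  move=> pD qD; rewrite (G_bary3 abcT pD) (G_bary3 abcT qD).
  by apply: (@side_exchange R V a b c v w p q (fun x => g x)); rewrite -G_bary3.
have vptD y : y \in [set a; b; c] -> in_simplex [set a; b; c] (vpt R y).
  by move/in_simplex_vpt.
have Sx : side a b c v w (vpt R x) != 0.
  apply/eqP => Sx0; apply: vw; apply: side_vpt_eq0 ab bc ac vD wD _ _ _;
    apply/eqP; rewrite -(mulrI_eq0 _ (lregP gx)) (exch _ _ (vptD _ xD)) ?Sx0 ?mulr0 //;
    by apply: vptD; rewrite !inE eqxx ?orbT.
exists (g x / side a b c v w (vpt R x)) => [|p pD]; first by rewrite mulf_neq0 ?invr_eq0.
by apply: (mulIf Sx); rewrite (exch _ _ pD (vptD _ xD)); field.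
Qed.

Lemma boundary_zeros_swaps a b c v w : [set a; b; c] \in T ->
  in_simplex [set a; b; c] v -> in_simplex [set a; b; c] w -> v <> w ->
  no_common_edge a b c v w ->
  boundary_zero a b c v -> boundary_zero a b c w ->
  (exists2 x, x \in [set a; b; c] & g x != 0) -> swaps_tri f i j a b c v w.
Proof.
move=> abcT vD wD vw apart [Gv vB] [Gw wB] nz; have [ab bc ac] := triangle_neq abcT.
have [k k0 Gk] := G_prop_side abcT vD wD vw Gv Gw nz.
have [[x xD gx_gt0] [y yD gy_lt0]] := zeros_two_signed abcT vD wD apart Gv Gw nz.
have k2_gt0 : 0 < k * k by rewrite lt_def mulf_neq0 //= -expr2 sqr_ge0.
have side_gt0 p : in_simplex [set a; b; c] p -> (0 < side a b c v w p) = (0 < G p * k).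
  by move=> pD; rewrite Gk // mulrAC pmulr_rgt0.
have side_lt0 p : in_simplex [set a; b; c] p -> (side a b c v w p < 0) = (G p * k < 0).
  by move=> pD; rewrite Gk // mulrAC pmulr_rlt0.
have [xD' yD'] : in_simplex [set a; b; c] (vpt R x) /\ in_simplex [set a; b; c] (vpt R y).
  by split; apply/in_simplex_vpt.
have k_sign : 0 < k \/ k < 0 by case: (ltgtP k 0) k0 => //; [right | left].
split.
- move=> p pD; split=> [/eq_fG|pS].
    by rewrite Gk // => /eqP; rewrite mulf_eq0 (negbTE k0) => /eqP; apply: side_eq0_on_seg.
  by apply/eq_fG; rewrite Gk // (side_on_seg _ _ _ pS) mulr0.
- by case: k_sign => k_sign; [exists (vpt R x) | exists (vpt R y)];
    split=> //; rewrite side_gt0 //; nra.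
- by case: k_sign => k_sign; [exists (vpt R y) | exists (vpt R x)];
    split=> //; rewrite side_lt0 //; nra.
- move=> p1 p2 p1D p2D s1 s2; apply/diff_order_below/below_mul_lt0.
  by rewrite !Gk // mulrACA pmulr_rlt0 // pmulr_rlt0.
Qed.

Lemma zero_segment_boundary a b c v w : [set a; b; c] \in T ->
  in_simplex [set a; b; c] v -> in_simplex [set a; b; c] w -> v <> w ->
  G v = 0 -> G w = 0 ->
  (forall p, in_simplex [set a; b; c] p -> G p = 0 -> on_seg v w p) ->
  exists2 x, x \in [set a; b; c] & v x = 0.
Proof.
move=> abcT vD wD vw Gv Gw zero_seg; have [ab bc ac] := triangle_neq abcT.
have [/exists_eq_inP //|/exists_inPn v_neq0] := boolP [exists x in [set a; b; c], v x == 0].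
have [v_a v_b v_c vs v0] := (in_simplex3P ab bc ac v).1 vD.
have [w_a w_b w_c ws w0] := (in_simplex3P ab bc ac w).1 wD.
have v_gt0 x : x \in [set a; b; c] -> 0 < v x.
  by move=> xD; have [v_ge0 _ _] := vD; rewrite lt_def v_neq0 // v_ge0.
(* If v is interior, the zero line of G continues past v inside the triangle. *)
pose e := Num.min (v a) (Num.min (v b) (v c)).
have e_gt0 : 0 < e by rewrite !lt_min !v_gt0 // !inE eqxx ?orbT.
have [ea eb ec] : [/\ e <= v a, e <= v b & e <= v c] by rewrite !ge_min !lexx ?orbT.
pose p x := (1 + e) * v x - e * w x.
have pD : in_simplex [set a; b; c] p.
  have [wa1 wb1 wc1] : [/\ w a <= 1, w b <= 1 & w c <= 1] by split; lra.
  apply/(in_simplex3P ab bc ac); rewrite /bary3 /p; split; [nra | nra | nra | |].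
    transitivity ((1 + e) * (v a + v b + v c) - e * (w a + w b + w c)); first ring.
    by rewrite vs ws; ring.
  by move=> x xa xb xc; rewrite v0 // w0 //; ring.
have Gp : G p = 0.
  move: Gv Gw; rewrite (G_bary3 abcT pD) (G_bary3 abcT vD) (G_bary3 abcT wD) /p => Gv Gw.
  transitivity ((1 + e) * (v a * g a + v b * g b + v c * g c)
                - e * (w a * g a + w b * g b + w c * g c)); first ring.
  by rewrite Gv Gw; ring.
case: (zero_seg p pD Gp) => t [t_ge0 _ pE]; case: vw; apply: functional_extensionality => x.
have : (t + e) * (v x - w x) = p x - ((1 - t) * v x + t * w x) by rewrite /p; ring.
by rewrite -pE subrr => /eqP; rewrite mulf_eq0 subr_eq0 => /orP[/eqP|/eqP //]; lra.
Qed.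

Lemma swaps_tri_boundary_zeros a b c v w : [set a; b; c] \in T ->
  in_simplex [set a; b; c] v -> in_simplex [set a; b; c] w -> v <> w ->
  swaps_tri f i j a b c v w ->
  [/\ boundary_zero a b c v, boundary_zero a b c w
     & exists2 x, x \in [set a; b; c] & g x != 0].
Proof.
move=> abcT vD wD vw [zero_set [p1 [p1D s1]] [p2 [p2D s2]] cross].
have zero_seg p : in_simplex [set a; b; c] p -> G p = 0 -> on_seg v w p.
  by move=> pD /eq_fG /(zero_set p pD).
have Gv : G v = 0 by apply/eq_fG/(zero_set v vD)/on_seg_left.
have Gw : G w = 0 by apply/eq_fG/(zero_set w wD)/on_seg_right.
split.
- by split; last exact: (zero_segment_boundary abcT vD wD vw Gv Gw zero_seg).
- split=> //; apply: (zero_segment_boundary abcT wD vD (nesym vw) Gw Gv) => p pD Gp.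
  by apply/on_segC/zero_seg.
- have [/exists_inP //|/exists_inPn g0] := boolP [exists x in [set a; b; c], g x != 0].
  have gD0 x : x \in [set a; b; c] -> g x = 0 by move/g0/negPn/eqP.
  have := cross p1 p2 p1D p2D s1 s2.
  rewrite diff_order_below (G_bary3 abcT p1D) (G_bary3 abcT p2D) !gD0 ?inE ?eqxx ?orbT //.
  by rewrite !mulr0 !addr0 eqxx.
Qed.

Lemma no_common_edge_of_no_edge a b c v w : [set a; b; c] \in T ->
  in_simplex [set a; b; c] v -> in_simplex [set a; b; c] w ->
  ~ (exists2 e, is_edge T e & in_simplex e v /\ in_simplex e w) ->
  no_common_edge a b c v w.
Proof.
move=> abcT vD wD no_edge x xD vx0; apply/eqP => wx0; apply: no_edge.
wlog xc : a b c abcT vD wD xD / x = c.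
  move=> base; case/set3P: (xD) => xE.
  - by apply: (base b c a); rewrite ?(set3_rot a b c).
  - by apply: (base c a b); rewrite ?(set3_rot b c a) ?(set3_rot a b c).
  - exact: (base a b c).
have [ab _ _] := triangle_neq abcT; rewrite xc in vx0 wx0.
exists [set a; b]; last by split; apply: in_simplex_edge; [exact: vD | | exact: wD |].
split; first by rewrite cards2 ab.
by exists [set a; b; c] => //; apply/subsetP => y; rewrite !inE => ->.
Qed.

Lemma swaps_tri_iff_detected a b c v w : [set a; b; c] \in T ->
  in_simplex [set a; b; c] v -> in_simplex [set a; b; c] w -> v <> w ->
  ~ (exists2 e, is_edge T e & in_simplex e v /\ in_simplex e w) ->
  (swaps_tri f i j a b c v w <-> detected_tri f i j a b c v w).
Proof.
move=> abcT vD wD vw no_edge; have apart := no_common_edge_of_no_edge abcT vD wD no_edge.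
split=> [swaps|[v_det w_det]].
  have [[Gv vB] [Gw wB] nz] := swaps_tri_boundary_zeros abcT vD wD vw swaps.
  have [pos neg] := zeros_two_signed abcT vD wD apart Gv Gw nz.
  by split; apply: boundary_zero_detected.
have [vz nz] := detected_at_boundary_zero abcT v_det.
have [wz _] := detected_at_boundary_zero abcT w_det.
exact: boundary_zeros_swaps.
Qed.

End Swaps.

Theorem lemmaA3 (R : realFieldType) (U V : finType) (N : nat)
  (sig : 'I_N -> {set U}) (T : {set {set V}}) (f : 'I_N -> (V -> R) -> R) :
  indexed_complex sig ->
  triangulated_surface T ->
  pl_fibered_filtration sig T f ->
  forall i j : 'I_N, i != j ->
  (* 1. the segment lies in a unique triangle {a,b,c} *)
  (forall (a b c : V) (v w : V -> R),
     [set a; b; c] \in T ->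
     in_simplex [set a; b; c] v -> in_simplex [set a; b; c] w -> v <> w ->
     ~ (exists2 e, is_edge T e & in_simplex e v /\ in_simplex e w) ->
     (swaps_tri f i j a b c v w <-> detected_tri f i j a b c v w)) /\
  (* 2. (v,w) = (a,b) is an interior edge with adjacent triangles {a,b,c1}, {a,b,c2} *)
  (forall a b c1 c2 : V,
     c1 != c2 -> [set a; b; c1] \in T -> [set a; b; c2] \in T ->
     (swaps_edge f i j a b c1 c2 <->
        (detected_tri f i j a b c1 (vpt R a) (vpt R b) /\
           ~ detected_tri f i j a b c2 (vpt R a) (vpt R b)) \/
        (~ detected_tri f i j a b c1 (vpt R a) (vpt R b) /\
           detected_tri f i j a b c2 (vpt R a) (vpt R b)))).
Proof.
move=> _ [T_card _ _] [_ f_affine] i j ij; split.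
- exact: swaps_tri_iff_detected.
- by move=> a b c1 c2 _; apply: swaps_edge_iff_detected_once.
Qed.
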